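(* Let $F$ be a field of characteristic $0$, $d\ge1$, let $\lambda=(h_1,\dots,h_n)\vdash k$, let $\sigma\in S_n$, and let $\sigma(\lambda)=(\mu_1,\dots,\mu_l)\vdash k$. Let $G:=ST(\lambda)(x_1,\dots,x_k)$, evaluated at $x_1,\dots,x_k\in M_d(F)$, viewed as an element of $M_d(F)^{\otimes n}=\mathrm{End}((F^d)^{\otimes n})$. If some $\mu_i$ is even or the $\mu_i$ are not pairwise distinct, then $\mathrm{tr}(\sigma G)=0$ for all $x_1,\dots,x_k$. Otherwise there is a sign $\pm$ (independent of the $x_i$) such that, as functions of $(x_1,\dots,x_k)\in M_d(F)^k$, $$\mathrm{tr}(\sigma G)=\pm\,T_{\mu_1}\wedge\cdots\wedge T_{\mu_l}.$$
   Context: $ST(\lambda)$: for a partition $\lambda=(h_1,\dots,h_n)\vdash k$, set $X_j:=x_{h_1+\dots+h_{j-1}+1}\cdots x_{h_1+\dots+h_j}$ and $ST(\lambda)(x_1,\dots,x_k):=\sum_{\tau\in S_k}\epsilon_\tau (X_1\otimes\cdots\otimes X_n)(x_{\tau(1)},\dots,x_{\tau(k)})$, the alternation of $X_1\otimes\cdots\otimes X_n$ over $x_1,\dots,x_k$. $S_n$ acts on $(F^d)^{\otimes n}$ by permuting tensor factors, normalized so that $\mathrm{tr}((m,m-1,\dots,1)\,y_1\otimes\cdots\otimes y_m)=\mathrm{tr}(y_1y_2\cdots y_m)$. For $\sigma\in S_n$ with cycle decomposition $c_1\cdots c_l$ (fixed points included as $1$-cycles), $\sigma(\lambda)$ is the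 partition $(\sum_{i\in c_1}h_i,\dots,\sum_{i\in c_l}h_i)$ arranged non-increasingly. $T_j(y_1,\dots,y_j):=\mathrm{tr}\big(\sum_{\tau\in S_j}\epsilon_\tau y_{\tau(1)}\cdots y_{\tau(j)}\big)$. For multilinear alternating functions $f$ in $h$ variables and $g$ in $m$ variables, $(f\wedge g)(x_1,\dots,x_{h+m}):=\frac{1}{h!m!}\sum_{\tau\in S_{h+m}}\epsilon_\tau f(x_{\tau(1)},\dots,x_{\tau(h)})g(x_{\tau(h+1)},\dots,x_{\tau(h+m)})$ (associative). *)

From HB Require Import structures.
From mathcomp Require Import all_boot all_order all_algebra all_fingroup.
Set Implicit Arguments. Unset Strict Implicit. Unset Printing Implicit Defensive.
Import Order.TTheory GRing.Theory Num.Theory.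
Local Open Scope ring_scope.

Section Defs.
Variable F : fieldType.
Variable d : nat.

Notation mprod := (@mulmx F d d d).

(* (F^d)^{(x)n} has basis e_i indexed by i : 'I_n -> 'I_d; an endomorphism A is
   given by its kernel: A i j = coefficient of e_i in A e_j. *)
Definition tidx (n : nat) := {ffun 'I_n -> 'I_d}.
Definition endo (n : nat) := tidx n -> tidx n -> F.

Definition endo_comp n (A B : endo n) : endo n :=
  fun i j => \sum_(l : tidx n) A i l * B l j.
Definition endo_tr n (A : endo n) : F := \sum_(i : tidx n) A i i.

Definition tensor n (y : 'I_n -> 'M[F]_d) : endo n :=
  fun i j => \prod_(t < n) y t (i t) (j t).

(* action of sigma permuting tensor factors: v_t is sent to position sigma t,
   i.e. sigma e_j = e_{j o sigma^-1}.  With this convention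
   tr((m,m-1,...,1) y_1 (x) ... (x) y_m) = tr(y_1 ... y_m). *)
Definition permop n (s : 'S_n) : endo n :=
  fun i j => ([forall t, i (s t) == j t])%:R.

(* X_j evaluated at x_{tau(1)},...,x_{tau(k)} (0-based indices) *)
Definition Xblock n k (h : 'I_n -> nat) (x : nat -> 'M[F]_d) (tau : 'S_k)
  (j : 'I_n) : 'M[F]_d :=
  let a := (\sum_(i < n | i < j) h i)%N in
  \big[mprod/1%:M]_(p < k | (a <= p)%N && (p < a + h j)%N) x (val (tau p)).

Definition ST_G n k (h : 'I_n -> nat) (x : nat -> 'M[F]_d) : endo n :=
  fun i j => \sum_(tau : 'S_k) (-1) ^+ odd_perm tau *
               tensor (Xblock h x tau) i j.

Definition trSG n k (h : 'I_n -> nat) (s : 'S_n) (x : nat -> 'M[F]_d) : F :=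
  endo_tr (endo_comp (permop s) (ST_G k h x)).

Definition Tj (j : nat) (x : nat -> 'M[F]_d) : F :=
  \tr (\sum_(tau : 'S_j) (-1) ^+ odd_perm tau *:
         \big[mprod/1%:M]_(p < j) x (val (tau p))).

Definition permnat N (tau : 'S_N) (i : nat) : nat :=
  oapp (fun o : 'I_N => val (tau o)) i (insub i).

Definition wedge (h m : nat) (f g : (nat -> 'M[F]_d) -> F)
  (x : nat -> 'M[F]_d) : F :=
  (h`!%:R * m`!%:R)^-1 *
  \sum_(tau : 'S_(h + m)) (-1) ^+ odd_perm tau *
     f (fun i => x (permnat tau i)) * g (fun i => x (permnat tau (h + i))).

(* T_{mu_1} /\ ... /\ T_{mu_l} (bracketed to the right; wedge is associative) *)
Fixpoint wedgeT (s : seq nat) : (nat -> 'M[F]_d) -> F :=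
  match s with
  | [::] => fun _ => 1
  | m :: s' => wedge m (sumn s') (Tj m) (wedgeT s')
  end.

End Defs.

(* sigma(lambda): the sums of h over the cycles of sigma (fixed points
   included), arranged non-increasingly *)
Definition cyc_type n (h : 'I_n -> nat) (s : 'S_n) : seq nat :=
  sort geq [seq (\sum_(i in c) h i)%N | c : {set 'I_n} <- enum (porbits s)].

(* Expanding G as the alternation of X_1 (x) ... (x) X_n and merging tensor
   factors along the cycles of sigma, tr(sigma G) becomes an alternation
   sum_tau eps_tau prod_c tr(x_{tau(w_c)}) of products of traces of words w_c,
   one word per cycle c, of length the part of sigma(lambda) attached to c, the
   words together using every index exactly once.  Rotating a word of even
   length, or exchanging two words of the same odd length, is an odd relabelling
   of the indices that leaves the product of traces unchanged, so the
   alternation vanishes in characteristic <> 2.  Otherwise a relabelling (whose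
   sign is the constant +-1) turns the words into consecutive blocks of lengths
   mu_1 >= ... >= mu_l, and the alternation over consecutive blocks is
   T_{mu_1} /\ ... /\ T_{mu_l}: the wedge of two alternations is the
   alternation of their product, the factorials of the wedge cancelling the sum
   over S_{mu_1} x S_{mu_2 + ... + mu_l}. *)

From HB Require Import structures.
From mathcomp Require Import all_boot all_order all_algebra all_fingroup.
From mathcomp Require Import ring zify.
Import Order.TTheory GRing.Theory Num.Theory.
Local Open Scope ring_scope.
Set Implicit Arguments. Unset Strict Implicit. Unset Printing Implicit Defensive.

Section PermOrbits.
Variable T : finType.
Implicit Types (s : {perm T}) (z : T).

Lemma porbit_sub_closed s (S : {set T}) z :
  (forall u, u \in S -> s u \in S) -> z \in S -> porbit s z \subset S.
Proof.
move=> sS zS; apply/subsetP => y /porbitP [i ->]; rewrite permX.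
by elim: i => //= i IH; apply: sS.
Qed.

Lemma mem_porbitS s z v : v \in porbit s z -> s v \in porbit s z.
Proof.
move=> vz; have <- : porbit s v = porbit s z by apply/eqP; rewrite eq_porbit_mem.
by have := mem_porbit s 1 v; rewrite expg1.
Qed.

Lemma porbit_fix s z : s z = z -> porbit s z = [set z].
Proof.
move=> sz; apply/eqP; rewrite eqEsubset sub1set porbit_id andbT.
by apply: porbit_sub_closed; rewrite ?inE // => u /set1P ->; rewrite sz set11.
Qed.

Definition orbit_weight (f : T -> nat) (C : {set T}) : nat := (\sum_(t in C) f t)%N.

Lemma card_orbit_weight_perm1 (f : T -> nat) m :
  #|[set C in porbits 1%g | orbit_weight f C == m]| = #|[set t | f t == m]|.
Proof.
have porbit1 (t : T) : porbit 1 t = [set t] by rewrite porbit_fix ?perm1.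
rewrite -(card_imset [set t | f t == m] set1_inj); apply: eq_card => C.
rewrite inE; apply/andP/imsetP => [[/imsetP[t _ ->]]|[t]].
  by rewrite porbit1 /orbit_weight big_set1 => ft; exists t; rewrite ?inE.
by rewrite inE => ft ->; rewrite -porbit1 imset_f //= porbit1 /orbit_weight big_set1.
Qed.

Section MergeStep.
Variables (s : {perm T}) (q r : T).
Hypotheses (sq : s q = r) (qr : q != r).
Local Notation s' := (tperm q r * s)%g.

Lemma tperm_mul_fix : s' r = r.
Proof. by rewrite permM tpermR sq. Qed.

Lemma sr_neq_r : s r != r.
Proof. by apply: contraNneq qr => srr; apply/eqP/(perm_inj (s := s)); rewrite sq srr. Qed.

Lemma porbit_r : porbit s r = porbit s q.
Proof. by rewrite -sq -(porbit_perm s 1 q) expg1. Qed.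

Lemma porbit_tperm_mul z : z != r -> porbit s' z = porbit s z :\ r.
Proof.
move=> zr; have s'E u : s' u = s (tperm q r u) by rewrite permM.
have sE u : s u = s' (tperm q r u) by rewrite s'E tpermK.
have r_out : r \notin porbit s' z.
  by rewrite porbit_sym (porbit_fix tperm_mul_fix) inE.
apply/eqP; rewrite eqEsubset; apply/andP; split.
  apply: porbit_sub_closed; last by rewrite !inE zr porbit_id.
  move=> u /setD1P[ur uz]; rewrite s'E.
  have [uq|uq] := eqVneq u q.
    by rewrite uq tpermL !inE sr_neq_r -sq; do 2 apply: mem_porbitS; rewrite -uq.
  rewrite tpermD 1?eq_sym // !inE (mem_porbitS uz) andbT.
  by apply: contra uq; rewrite -sq => /eqP /perm_inj ->.
suff /subsetP sub : porbit s z \subset porbit s' z :|: [set r].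
  by apply/subsetP => v /setD1P[vr /sub]; rewrite !inE (negPf vr) orbF.
have [qS|qS] := boolP (q \in porbit s' z).
  apply: porbit_sub_closed; last by rewrite inE porbit_id.
  move=> u; rewrite !inE => /orP[uS|/eqP ->]; last by rewrite sE tpermR mem_porbitS.
  have ur : u != r by apply: contraTneq uS => ->.
  have [->|uq] := eqVneq u q; first by rewrite sq eqxx orbT.
  by rewrite sE tpermD 1?eq_sym // mem_porbitS.
apply: subset_trans (subsetUl _ _); apply: porbit_sub_closed (porbit_id _ _).
move=> u uS; have ur : u != r by apply: contraTneq uS => ->.
have uq : u != q by apply: contraTneq uS => ->.
by rewrite sE tpermD 1?eq_sym // mem_porbitS.
Qed.

Lemma card_moved_tperm_mul : (#|[set t | s' t != t]| < #|[set t | s t != t]|)%N.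
Proof.
apply: proper_card; apply/properP; split.
  apply/subsetP => t; rewrite !inE permM.
  have [->|tq] := eqVneq t q; first by rewrite sq (eq_sym r q) qr.
  have [->|tr] := eqVneq t r; first by rewrite tpermR sq eqxx.
  by rewrite tpermD 1?eq_sym.
by exists r; rewrite inE ?sr_neq_r // tperm_mul_fix eqxx.
Qed.

Variables f f' : T -> nat.
Hypotheses (f'q : f' q = (f r + f q)%N) (f'r : f' r = 0%N)
  (f'E : forall t, t != q -> t != r -> f' t = f t).

Lemma orbit_weight_tperm_mul z :
  z != r -> orbit_weight f' (porbit s' z) = orbit_weight f (porbit s z).
Proof.
move=> zr; rewrite porbit_tperm_mul // /orbit_weight.
have [qC|qC] := boolP (q \in porbit s z).
  have rC : r \in porbit s z by rewrite -sq mem_porbitS.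
  rewrite [in RHS](bigD1 r) //= (bigD1 q) /=; last by rewrite !inE qr qC.
  rewrite f'q -addnA [in RHS](bigD1 q) /=; last by rewrite qC qr.
  congr (_ + (_ + _))%N; apply: eq_big => [t|t /andP[]].
    by rewrite !inE (andbC (t != r)).
  by rewrite !inE => /andP[tr _] tq; rewrite f'E.
have rC : r \notin porbit s z by rewrite -eq_porbit_mem porbit_r eq_porbit_mem.
apply: eq_big => [t|t]; first by rewrite !inE; case: eqP => // ->; rewrite (negPf rC).
by rewrite !inE => /andP[tr tC]; rewrite f'E //; apply: contraNneq qC => <-.
Qed.

Lemma card_orbit_weight_tperm_mul m : (0 < m)%N ->
  #|[set C in porbits s' | orbit_weight f' C == m]| =
  #|[set C in porbits s | orbit_weight f C == m]|.
Proof.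
move=> m_gt0; have orbitE C : C \in porbits s -> exists2 z, z != r & C = porbit s z.
  case/imsetP => z _ ->; have [->|zr] := eqVneq z r; last by exists z.
  by exists q; rewrite // porbit_r.
suff -> : [set C in porbits s' | orbit_weight f' C == m] =
          (fun C => C :\ r) @: [set C in porbits s | orbit_weight f C == m].
  rewrite card_in_imset // => C1 C2; rewrite !inE => /andP[/orbitE[z1 z1r ->] _].
  case/andP=> /orbitE[z2 z2r ->] _; rewrite -!porbit_tperm_mul // => e.
  apply/eqP; rewrite eq_porbit_mem.
  by have := porbit_id s' z1; rewrite e porbit_tperm_mul // => /setD1P[].
apply/setP => C; apply/idP/imsetP.
  rewrite inE => /andP[/imsetP[z _ ->] Cm].
  have [zr|zr] := eqVneq z r.
    move: Cm; rewrite zr (porbit_fix tperm_mul_fix) /orbit_weight big_set1 f'r.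
    by move=> /eqP m0; rewrite -m0 in m_gt0.
  exists (porbit s z); last by rewrite porbit_tperm_mul.
  by rewrite inE imset_f // -orbit_weight_tperm_mul.
case=> C'; rewrite inE => /andP[/orbitE[z zr ->] Cm] ->.
by rewrite -porbit_tperm_mul // inE imset_f // orbit_weight_tperm_mul.
Qed.

End MergeStep.
End PermOrbits.

Section NatPerm.
Variable k : nat.
Implicit Types (a b : 'S_k) (p : nat).

Lemma permnat_ord a (i : 'I_k) : permnat a i = a i.
Proof. by rewrite /permnat valK. Qed.

Lemma permnat_out a p : (k <= p)%N -> permnat a p = p.
Proof. by move=> kp; rewrite /permnat insubN // -leqNgt. Qed.

Lemma permnat_lt a p : (permnat a p < k)%N = (p < k)%N.
Proof.
case: (ltnP p k) => pk; last by rewrite permnat_out // ltnNge pk.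
by rewrite -[p]/(val (Ordinal pk)) permnat_ord ltn_ord.
Qed.

Lemma permnatM a b p : permnat (a * b)%g p = permnat b (permnat a p).
Proof.
case: (ltnP p k) => pk; last by rewrite !permnat_out // permnat_lt ltnNge pk.
by rewrite -[p]/(val (Ordinal pk)) !permnat_ord permM.
Qed.

Lemma permnat1 p : permnat (1%g : 'S_k) p = p.
Proof.
case: (ltnP p k) => pk; last by rewrite permnat_out.
by rewrite -[p]/(val (Ordinal pk)) permnat_ord perm1.
Qed.

Definition swapn (i j p : nat) : nat := if p == i then j else if p == j then i else p.

Lemma permnat_tperm (i j : 'I_k) p : permnat (tperm i j) p = swapn i j p.
Proof.
rewrite /swapn; case: (ltnP p k) => pk; last first.
  by rewrite permnat_out // !(gtn_eqF (leq_trans (ltn_ord _) pk)).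
rewrite -[X in permnat _ X]/(val (Ordinal pk)) permnat_ord permE /=.
by rewrite -!(inj_eq val_inj (Ordinal pk)) /=; case: ifP => // _; case: ifP.
Qed.

Definition tperm_nat (i j : nat) : 'S_k :=
  if insub i is Some oi then if insub j is Some oj then tperm oi oj else 1%g
  else 1%g.

Lemma permnat_tperm_nat i j p : (i < k)%N -> (j < k)%N ->
  permnat (tperm_nat i j) p = swapn i j p.
Proof.
by move=> ik jk; rewrite /tperm_nat !insubT /= permnat_tperm.
Qed.

Lemma odd_tperm_nat i j : (i < k)%N -> (j < k)%N -> odd_perm (tperm_nat i j) = (i != j).
Proof. by move=> ik jk; rewrite /tperm_nat !insubT /= odd_tperm -val_eqE. Qed.

Fixpoint cycle_perm (u : seq nat) : 'S_k :=
  if u is i :: l then (if l is j :: _ then tperm_nat i j * cycle_perm l else 1)%g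
  else 1%g.

Lemma permnat_cycle_perm_out u p : all (fun i => i < k)%N u -> p \notin u ->
  permnat (cycle_perm u) p = p.
Proof.
elim: u => [|i [|j l] IH] /=; rewrite ?permnat1 // => /and3P[ik jk lk].
rewrite !inE !negb_or => /and3P[pi pj pl]; rewrite permnatM permnat_tperm_nat //.
by rewrite /swapn (negPf pi) (negPf pj) IH //= ?jk ?inE ?negb_or ?pj.
Qed.

Lemma cycle_perm_rot u : all (fun i => i < k)%N u -> uniq u ->
  map (permnat (cycle_perm u)) (rot 1 u) = u.
Proof.
elim: u => [|i [|j l] IH] //; first by rewrite /= permnat1.
move=> /and3P[ik jk lk] /andP[iN ujl].
have jlk : all (fun i => i < k)%N (j :: l) by apply/andP.
have -> : cycle_perm [:: i, j & l] = (tperm_nat i j * cycle_perm (j :: l))%g by [].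
have := IH jlk ujl; set C := cycle_perm _; rewrite /rot /= !drop0 !take0 => IH'.
have [ij jN] : i != j /\ j \notin l by move: iN ujl; rewrite !inE negb_or => /andP[] ? ? /andP[].
rewrite permnatM permnat_tperm_nat // /swapn eq_sym (negPf ij) eqxx.
rewrite permnat_cycle_perm_out //; congr (_ :: _); rewrite -IH' !map_cat /=.
rewrite permnatM permnat_tperm_nat // /swapn eqxx; congr (_ ++ [:: _]).
apply/eq_in_map => z zl; rewrite permnatM permnat_tperm_nat // /swapn.
by rewrite (negPf (memPn iN z _)) ?(negPf (memPn jN z _)) ?inE ?zl ?orbT.
Qed.

Lemma odd_cycle_perm u : all (fun i => i < k)%N u -> uniq u ->
  odd_perm (cycle_perm u) = odd (size u).-1.
Proof.
elim: u => [|i [|j l] IH] /=; rewrite ?odd_perm1 // => /and3P[ik jk lk] /andP[iN ujl].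
rewrite odd_permM odd_tperm_nat // IH //= ?jk //.
by have -> : i != j by apply: contra iN => /eqP ->; rewrite inE eqxx.
Qed.

Fixpoint swap_perm (u v : seq nat) : 'S_k :=
  if u is i :: u' then if v is j :: v' then (tperm_nat i j * swap_perm u' v')%g else 1%g
  else 1%g.

Lemma swap_permP u v : all (fun i => i < k)%N (u ++ v) -> uniq (u ++ v) ->
  size u = size v ->
  [/\ map (permnat (swap_perm u v)) u = v, map (permnat (swap_perm u v)) v = u,
      {in predC (mem (u ++ v)), permnat (swap_perm u v) =1 id}
    & odd_perm (swap_perm u v) = odd (size u)].
Proof.
elim: u v => [|i u IH] [|j v] //=.
  by move=> _ _ _; split => [||p _|]; rewrite ?permnat1 ?odd_perm1.
move=> /andP[ik]; rewrite all_cat /= => /and3P[uk jk vk].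
move=> /andP[iN]; rewrite cat_uniq /= => /and4P[uu /norP[ju uvd] jv vv] [esz].
have uvk : all (fun i => i < k)%N (u ++ v) by rewrite all_cat uk vk.
have uvu : uniq (u ++ v) by rewrite cat_uniq uu uvd vv.
have [mu mv mo modd] := IH v uvk uvu esz.
move: iN; rewrite mem_cat inE negb_or => /andP[iu /norP[ij iv]].
have swapnE p : p != i -> p != j -> swapn i j p = p.
  by move=> /negPf pi /negPf pj; rewrite /swapn pi pj.
have mo_i : permnat (swap_perm u v) i = i by rewrite mo // !inE mem_cat negb_or iu iv.
have mo_j : permnat (swap_perm u v) j = j by rewrite mo // !inE mem_cat negb_or ju jv.
split.
- rewrite permnatM permnat_tperm_nat // /swapn eqxx mo_j -[in RHS]mu; congr (_ :: _).
  apply/eq_in_map => p pu; rewrite permnatM permnat_tperm_nat // swapnE //.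
    by apply: contraNneq iu => <-.
  by apply: contraNneq ju => <-.
- rewrite permnatM permnat_tperm_nat // /swapn eqxx eq_sym (negPf ij) mo_i.
  rewrite -[in RHS]mv; congr (_ :: _).
  apply/eq_in_map => p pv; rewrite permnatM permnat_tperm_nat // swapnE //.
    by apply: contraNneq iv => <-.
  by apply: contraNneq jv => <-.
- move=> p; rewrite !inE mem_cat inE !negb_or => /and4P[pi pu pj pv].
  by rewrite permnatM permnat_tperm_nat // swapnE // mo // !inE mem_cat negb_or pu pv.
- by rewrite odd_permM odd_tperm_nat // ij modd.
Qed.
End NatPerm.

Lemma odd_perm_morph m N (f : 'S_m -> 'S_N) :
  {morph f : a b / (a * b)%g} ->
  (forall i j : 'I_m, odd_perm (f (tperm i j)) = (i != j)) ->
  forall a, odd_perm (f a) = odd_perm a.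
Proof.
move=> fM f_tperm a; case: (prod_tpermP a) => ts -> _; elim: ts => [|t ts IH].
  by rewrite !big_nil odd_perm1; have := odd_permM (f 1%g) (f 1%g); rewrite -fM mulg1 addbb.
by rewrite !big_cons fM !odd_permM IH f_tperm odd_tperm.
Qed.

Section PermDirectSum.
Variables m n : nat.
Implicit Types (a : 'S_m) (b : 'S_n).

Definition sum_map a b (u : 'I_m + 'I_n) : 'I_m + 'I_n :=
  match u with inl i => inl (a i) | inr j => inr (b j) end.

Lemma sum_map_inj a b : injective (sum_map a b).
Proof. by case=> [i|j] [i'|j'] //= [] /perm_inj ->. Qed.

Definition dsum_perm a b : 'S_(m + n) :=
  perm (inj_comp (can_inj unsplitK) (inj_comp (@sum_map_inj a b) (can_inj splitK))).

Lemma dsum_permE a b (x : 'I_m + 'I_n) : dsum_perm a b (unsplit x) = unsplit (sum_map a b x).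
Proof. by rewrite permE /= unsplitK. Qed.

Lemma dsum_permM a1 a2 b1 b2 :
  dsum_perm (a1 * a2)%g (b1 * b2)%g = (dsum_perm a1 b1 * dsum_perm a2 b2)%g.
Proof.
apply/permP => x; rewrite -(splitK x) permM !dsum_permE.
by case: (split x) => y; rewrite /= !permM.
Qed.

Lemma dsum_perm_tperml (i j : 'I_m) :
  dsum_perm (tperm i j) 1 = tperm (lshift n i) (lshift n j).
Proof.
apply/permP => x; rewrite -(splitK x) dsum_permE.
case: (split x) => y /=; first by rewrite (inj_tperm _ _ _ (@lshift_inj m n)).
by rewrite perm1 tpermD // eq_lrshift.
Qed.

Lemma dsum_perm_tpermr (i j : 'I_n) :
  dsum_perm 1 (tperm i j) = tperm (rshift m i) (rshift m j).
Proof.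
apply/permP => x; rewrite -(splitK x) dsum_permE.
case: (split x) => y /=; last by rewrite (inj_tperm _ _ _ (@rshift_inj m n)).
by rewrite perm1 tpermD // eq_rlshift.
Qed.

Lemma odd_dsum_perm a b : odd_perm (dsum_perm a b) = odd_perm a (+) odd_perm b.
Proof.
have -> : dsum_perm a b = (dsum_perm a 1 * dsum_perm 1 b)%g by rewrite -dsum_permM mulg1 mul1g.
have oddl : odd_perm (dsum_perm a 1) = odd_perm a.
  apply: (@odd_perm_morph _ _ (dsum_perm ^~ 1%g)) => [a1 a2|i j] /=.
    by rewrite -dsum_permM mulg1.
  by rewrite dsum_perm_tperml odd_tperm eq_lshift.
have oddr : odd_perm (dsum_perm 1 b) = odd_perm b.
  apply: (@odd_perm_morph _ _ (dsum_perm 1%g)) => [b1 b2|i j] /=.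
    by rewrite -dsum_permM mulg1.
  by rewrite dsum_perm_tpermr odd_tperm eq_rshift.
by rewrite odd_permM oddl oddr.
Qed.

Lemma permnat_dsum_perm a b p :
  permnat (dsum_perm a b) p = if (p < m)%N then permnat a p else (m + permnat b (p - m))%N.
Proof.
case: (ltnP p (m + n)) => pmn; last first.
  have mp : (m <= p)%N := leq_trans (leq_addr n m) pmn.
  by rewrite permnat_out // ltnNge mp /= permnat_out ?subnKC // leq_subRL.
rewrite -[p]/(val (Ordinal pmn)) permnat_ord permE /=.
case: splitP => [j /= ->|j /= ->] /=; first by rewrite ltn_ord permnat_ord.
by rewrite ltnNge leq_addr /= addKn permnat_ord.
Qed.

End PermDirectSum.

Lemma uniq_bounded_perm_iota k s :
  perm_eq s (iota 0 k) -> uniq s && all (fun i => i < k)%N s.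
Proof.
move=> ps; rewrite (perm_uniq ps) iota_uniq /=.
by apply/allP => p; rewrite (perm_mem ps) mem_iota.
Qed.

Lemma perm_eq_collision (T S : eqType) (f : T -> S) (s : seq T) :
  ~~ uniq (map f s) -> exists u v s', perm_eq s [:: u, v & s'] /\ f u = f v.
Proof.
elim: s => [|w s IH] //=; rewrite negb_and negbK.
case/orP => [/mapP[v vs efv]|/IH[u [v [s' [ps efu]]]]].
  by exists w, v, (rem v s); rewrite perm_cons perm_to_rem.
exists u, v, (w :: s'); split => //.
apply: perm_trans (_ : perm_eq [:: w, u, v & s'] _); first by rewrite perm_cons.
by rewrite -[[:: w, u, v & s']]/([:: w] ++ [:: u; v] ++ s') perm_catCA.
Qed.

Section AltTraceProducts.
Variables (F : fieldType) (d : nat).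
Local Notation M := 'M[F]_d.

HB.instance Definition _ := Monoid.isLaw.Build M 1%:M (@mulmx F d d d)
  (@mulmxA F d d d d) (@mul1mx F d d) (@mulmx1 F d d).

Definition wordmx (y : nat -> M) (u : seq nat) : M :=
  \big[@mulmx F d d d/1%:M]_(p <- u) y p.

Lemma wordmx_cat y u v : wordmx y (u ++ v) = wordmx y u *m wordmx y v.
Proof. by rewrite /wordmx big_cat. Qed.

Lemma mxtrace_wordmx_rot y u : \tr (wordmx y (rot 1 u)) = \tr (wordmx y u).
Proof. by rewrite /rot wordmx_cat mxtrace_mulC -wordmx_cat cat_take_drop. Qed.

Lemma signed_sum_perm_mull k (rho : 'S_k) (f : 'S_k -> F) :
  \sum_(t : 'S_k) (-1) ^+ odd_perm t * f (rho * t)%g =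
  (-1) ^+ odd_perm rho * \sum_(t : 'S_k) (-1) ^+ odd_perm t * f t.
Proof.
rewrite mulr_sumr (reindex_inj (mulgI rho^-1)%g) /=.
by apply: eq_bigr => t _; rewrite mulgA mulgV mul1g odd_permM odd_permV signr_addb mulrA.
Qed.

Definition alt_trprod k (W : seq (seq nat)) (x : nat -> M) : F :=
  \sum_(t : 'S_k) (-1) ^+ odd_perm t *
     \prod_(u <- W) \tr (wordmx (fun p => x (permnat t p)) u).

Lemma alt_trprod_relabel k (rho : 'S_k) W x :
  alt_trprod k (map (map (permnat rho)) W) x = (-1) ^+ odd_perm rho * alt_trprod k W x.
Proof.
rewrite /alt_trprod -signed_sum_perm_mull; apply: eq_bigr => t _; congr (_ * _).
rewrite big_map; apply: eq_bigr => u _; rewrite /wordmx big_map.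
by congr (\tr _); apply: eq_bigr => p _; rewrite permnatM.
Qed.

Lemma alt_trprod_perm_eq k W1 W2 x : perm_eq W1 W2 -> alt_trprod k W1 x = alt_trprod k W2 x.
Proof. by move=> pW; apply: eq_bigr => t _; rewrite (perm_big _ pW). Qed.

Lemma alt_trprod_rot k u W x : alt_trprod k (rot 1 u :: W) x = alt_trprod k (u :: W) x.
Proof. by apply: eq_bigr => t _; rewrite !big_cons mxtrace_wordmx_rot. Qed.

Hypothesis two_neq0 : 2%:R != 0 :> F.

Lemma alt_trprod_eq0_odd_relabel k (rho : 'S_k) W x : odd_perm rho ->
  alt_trprod k (map (map (permnat rho)) W) x = alt_trprod k W x -> alt_trprod k W x = 0.
Proof.
rewrite alt_trprod_relabel => -> /eqP; set A := alt_trprod k W x.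
rewrite expr1 mulN1r -subr_eq0 -opprD -mulr2n oppr_eq0 -mulr_natr mulf_eq0.
by rewrite (negPf two_neq0) orbF => /eqP.
Qed.

Lemma alt_trprod_even_eq0 k u W x : perm_eq (flatten (u :: W)) (iota 0 k) ->
  u != [::] -> ~~ odd (size u) -> alt_trprod k (u :: W) x = 0.
Proof.
move=> /uniq_bounded_perm_iota /andP[]; rewrite /= cat_uniq all_cat.
move=> /and3P[uu uW _] /andP[uk _]; rewrite -size_eq0 => u_nz ev_u.
rewrite -alt_trprod_rot; apply: (alt_trprod_eq0_odd_relabel (rho := cycle_perm k u)).
  by rewrite odd_cycle_perm //; case: (size u) u_nz ev_u => //= ? _; rewrite negbK.
rewrite alt_trprod_rot /= cycle_perm_rot //; congr (alt_trprod _ (_ :: _) _).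
apply: map_id_in => w wW; apply: map_id_in => p pw.
apply: permnat_cycle_perm_out => //; apply: contra uW => pu.
by apply/hasP; exists p => //; apply/flattenP; exists w.
Qed.

Lemma alt_trprod_twins_eq0 k u v W x : perm_eq (flatten [:: u, v & W]) (iota 0 k) ->
  size u = size v -> odd (size u) -> alt_trprod k [:: u, v & W] x = 0.
Proof.
move=> /uniq_bounded_perm_iota /andP[]; rewrite /= catA cat_uniq all_cat.
move=> /and3P[uvu uvW _] /andP[uvk _] esz odd_u.
have [mu mv mo odd_swap] := swap_permP uvk uvu esz.
apply: (alt_trprod_eq0_odd_relabel (rho := swap_perm k u v)); first by rewrite odd_swap.
have fixW : map (map (permnat (swap_perm k u v))) W = W.
  apply: map_id_in => w wW; apply: map_id_in => p pw; apply: mo.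
  by apply: contra uvW => puv; apply/hasP; exists p => //; apply/flattenP; exists w.
rewrite /= mu mv fixW; apply: eq_bigr => t _; congr (_ * _).
by rewrite !big_cons mulrCA.
Qed.

Lemma alt_trprod_eq0 k W x : perm_eq (flatten W) (iota 0 k) ->
  all (fun u => u != [::]) W ->
  ~~ (all odd (map size W) && uniq (map size W)) -> alt_trprod k W x = 0.
Proof.
move=> labW W_nz; have labP W' : perm_eq W W' -> perm_eq (flatten W') (iota 0 k).
  by move=> pW; rewrite -(permPl (perm_flatten pW)).
have even_eq0 u W' : perm_eq W (u :: W') -> ~~ odd (size u) -> alt_trprod k W x = 0.
  move=> pW ev_u; rewrite (alt_trprod_perm_eq _ _ pW) alt_trprod_even_eq0 ?labP //.
  by move/allP: W_nz; apply; rewrite (perm_mem pW) mem_head.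
case/nandP => [/allPn[_ /mapP[u uW ->]]|/perm_eq_collision[u [v [W' [pW esz]]]]].
  exact: even_eq0 (perm_to_rem uW).
have [odd_u|] := boolP (odd (size u)); last exact: even_eq0 pW.
by rewrite (alt_trprod_perm_eq _ _ pW) alt_trprod_twins_eq0 ?labP.
Qed.
End AltTraceProducts.

Lemma bigD2 (R : Type) (idx : R) (op : Monoid.com_law idx) (I : finType)
    (f : I -> R) (q r : I) : q != r ->
  \big[op/idx]_t f t = op (f q) (op (f r) (\big[op/idx]_(t | (t != q) && (t != r)) f t)).
Proof. by move=> qr; rewrite (bigD1 q) // (bigD1 r) //= eq_sym. Qed.

Section PermTensorTrace.
Variables (F : fieldType) (d : nat).
Local Notation M := 'M[F]_d.

(* tr(s o (Y_0 (x) ... (x) Y_{n-1})), with s acting as [permop s] *)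
Definition tr_perm_tensor n (s : 'S_n) (Y : 'I_n -> M) : F :=
  \sum_(i : tidx d n) \prod_(t < n) Y t (i (s t)) (i t).

Lemma eq_tr_perm_tensor n (s : 'S_n) (Y1 Y2 : 'I_n -> M) :
  Y1 =1 Y2 -> tr_perm_tensor s Y1 = tr_perm_tensor s Y2.
Proof. by move=> e; apply: eq_bigr => i _; apply: eq_bigr => t _; rewrite e. Qed.

Lemma tr_perm_tensor1 n (Y : 'I_n -> M) : tr_perm_tensor 1 Y = \prod_t \tr (Y t).
Proof.
rewrite /tr_perm_tensor /mxtrace bigA_distr_bigA; apply: eq_bigr => i _.
by apply: eq_bigr => t _; rewrite perm1.
Qed.

Definition set_coord n (i : tidx d n) (r : 'I_n) (c : 'I_d) : tidx d n :=
  [ffun t => if t == r then c else i t].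

Lemma sum_set_coord n (r : 'I_n) (G : tidx d n -> 'I_d -> F) :
  \sum_(i : tidx d n) \sum_(c < d) G i c =
  \sum_(i : tidx d n) \sum_(c < d) G (set_coord i r c) (i r).
Proof.
rewrite !pair_big /=.
pose phi (p : tidx d n * 'I_d) := (set_coord p.1 r p.2, p.1 r).
have phiK : involutive phi.
  move=> [i c]; rewrite /phi /= ffunE eqxx; congr (_, _).
  by apply/ffunP => t; rewrite !ffunE; case: eqP => // ->.
by rewrite (reindex_inj (inv_inj phiK)).
Qed.

(* any matrix of trace one, placed at the fixed points created by merging *)
Variable E : M.
Hypothesis trE : \tr E = 1.

(* The factor at [r] is absorbed into the one at [q], which turns the cycle
   (.. q r (s r) ..) of [s] into (.. q (s r) ..) and leaves [r] a fixed point
   carrying a matrix of trace one. *)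
Lemma tr_perm_tensor_merge n (s : 'S_n) (Y : 'I_n -> M) (q r : 'I_n) :
  s q = r -> q != r ->
  tr_perm_tensor s Y = tr_perm_tensor (tperm q r * s)%g
    (fun t => if t == q then Y r *m Y q else if t == r then E else Y t).
Proof.
move=> sq qr.
have sr t : t != q -> (s t == r) = false.
  by move=> tq; apply/negbTE; apply: contra tq; rewrite -sq => /eqP /perm_inj ->.
pose A (i : tidx d n) := \prod_(t | (t != q) && (t != r)) Y t (i (s t)) (i t).
have -> : tr_perm_tensor s Y = \sum_(i : tidx d n) \sum_(c < d)
    Y q c (i q) * (Y r (i (s r)) c * A i) * E (i r) (i r).
  transitivity (\sum_(i : tidx d n) \sum_(c < d)
     Y q (i r) (i q) * (Y r (i (s r)) (i r) * A i) * E c c).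
    apply: eq_bigr => i _; rewrite -mulr_sumr -/(\tr E) trE mulr1.
    by rewrite (bigD2 _ _ qr) sq.
  rewrite (sum_set_coord r); apply: eq_bigr => i _; apply: eq_bigr => c _.
  rewrite !ffunE eqxx (negPf qr) sr 1?eq_sym //; congr (_ * (_ * _) * _).
  by apply: eq_bigr => t /andP[tq tr]; rewrite !ffunE (negPf tr) sr.
apply: eq_bigr => i _.
rewrite (bigD2 _ _ qr) /= !permM tpermL tpermR sq eqxx.
rewrite (eq_sym r q) (negPf qr) eqxx [(Y r *m Y q) _ _]mxE mulr_suml.
apply: eq_bigr => c _.
have -> : \prod_(t | (t != q) && (t != r))
    (if t == q then Y r *m Y q else if t == r then E else Y t)
      (i ((tperm q r * s)%g t)) (i t) = A i.
  apply: eq_bigr => t /andP[tq tr].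
  by rewrite (negPf tq) (negPf tr) permM tpermD // eq_sym.
ring.
Qed.

Definition wordmx_or (y : nat -> M) (u : seq nat) : M :=
  if u is [::] then E else wordmx y u.

Definition merge_words n (w : 'I_n -> seq nat) (q r : 'I_n) (t : 'I_n) : seq nat :=
  if t == q then w r ++ w q else if t == r then [::] else w t.

Lemma tr_perm_tensor_merge_words n (s : 'S_n) (w : 'I_n -> seq nat) q r y :
  s q = r -> q != r -> w q != [::] -> w r != [::] ->
  tr_perm_tensor s (fun t => wordmx_or y (w t)) =
  tr_perm_tensor (tperm q r * s)%g (fun t => wordmx_or y (merge_words w q r t)).
Proof.
move=> sq qr wq wr; rewrite (tr_perm_tensor_merge _ sq qr).
apply: eq_tr_perm_tensor => t; rewrite /merge_words.
case: eqP => _; last by case: eqP.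
by case: (w q) wq => // ? ?; case: (w r) wr => // ? ? _ _; rewrite -wordmx_cat.
Qed.

Lemma count_merge_words n (w : 'I_n -> seq nat) q r (P : pred nat) : q != r ->
  (\sum_t count P (merge_words w q r t) = \sum_t count P (w t))%N.
Proof.
move=> qr; rewrite !(bigD2 _ _ qr) /= /merge_words eqxx (eq_sym r q) (negPf qr) eqxx.
rewrite count_cat (eq_bigr (fun t => count P (w t))) /=; first lia.
by move=> t /andP[/negPf -> /negPf ->].
Qed.

Lemma tr_perm_tensor_words n (s : 'S_n) (w : 'I_n -> seq nat) :
  (forall t, w t = [::] -> s t = t) ->
  exists w' : 'I_n -> seq nat,
   [/\ forall y, tr_perm_tensor s (fun t => wordmx_or y (w t)) =
                 \prod_t \tr (wordmx_or y (w' t)),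
       forall P : pred nat, (\sum_t count P (w' t) = \sum_t count P (w t))%N
     & forall m, (0 < m)%N -> #|[set t | size (w' t) == m]| =
          #|[set C in porbits s | orbit_weight (fun t => size (w t)) C == m]|].
Proof.
have [N] := ubnP #|[set t | s t != t]|; elim: N s w => // N IH s w moved_s w_fix.
case: (pickP [pred t | s t != t]) => [q /= sqq | s_fix]; last first.
  have -> : s = 1%g by apply/permP => t; rewrite perm1; apply/eqP/negbFE/s_fix.
  exists w; split=> // [y | m _]; first by rewrite tr_perm_tensor1.
  by rewrite card_orbit_weight_perm1.
set r := s q; have qr : q != r by rewrite eq_sym.
have sq : s q = r by [].
have nz t : s t != t -> w t != [::] by apply: contra => /eqP /w_fix ->.
have srr := sr_neq_r sq qr.
have moved' : (#|[set t | (tperm q r * s)%g t != t]| < N)%N.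
  by apply: leq_trans (card_moved_tperm_mul sq qr) _.
have fix' t : merge_words w q r t = [::] -> (tperm q r * s)%g t = t.
  rewrite /merge_words permM; case: eqP => [_|/eqP tq].
    by case: (w r) (nz r srr).
  case: eqP => [-> _|/eqP tr /w_fix st]; first by rewrite tpermR.
  by rewrite tpermD 1?eq_sym.
have [w' [trw' countw' cardw']] := IH _ _ moved' fix'.
exists w'; split => [y | P | m m_gt0].
- by rewrite (tr_perm_tensor_merge_words _ sq qr (nz q sqq) (nz r srr)) trw'.
- by rewrite countw' count_merge_words.
- rewrite cardw' // (card_orbit_weight_tperm_mul sq qr (f := fun t => size (w t))) //.
  + by rewrite /merge_words eqxx size_cat.
  + by rewrite /merge_words (eq_sym r q) (negPf qr) eqxx.
  + by move=> t tq tr; rewrite /merge_words (negPf tq) (negPf tr).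
Qed.

End PermTensorTrace.

Section Wedge.
Variables (F : fieldType) (d : nat).
Local Notation M := 'M[F]_d.
Hypothesis F_char0 : [pchar F] =i pred0.

Lemma Tj_alt_trprod m (y : nat -> M) : Tj m y = alt_trprod m [:: iota 0 m] y.
Proof.
rewrite /Tj /alt_trprod linear_sum /=; apply: eq_bigr => t _.
have -> : iota 0 m = index_iota 0 m by rewrite /index_iota subn0.
rewrite mxtraceZ big_seq1 /wordmx big_mkord.
by congr (_ * \tr _); apply: eq_bigr => p _; rewrite permnat_ord.
Qed.

Lemma eq_wedge h m (f1 f2 g1 g2 : (nat -> M) -> F) (x : nat -> M) :
  f1 =1 f2 -> g1 =1 g2 -> wedge h m f1 g1 x = wedge h m f2 g2 x.
Proof. by move=> ef eg; congr (_ * _); apply: eq_bigr => t _; rewrite ef eg. Qed.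

Lemma wedge_alt_trprod m n (W1 W2 : seq (seq nat)) (x : nat -> M) :
  all (fun p => p < m)%N (flatten W1) ->
  wedge m n (alt_trprod m W1) (alt_trprod n W2) x =
  alt_trprod (m + n) (W1 ++ map (map (addn m)) W2) x.
Proof.
move=> W1m.
pose Phi (t : 'S_(m + n)) := (-1) ^+ odd_perm t *
  \prod_(u <- W1 ++ map (map (addn m)) W2) \tr (wordmx (fun p => x (permnat t p)) u).
have expand t : (-1) ^+ odd_perm t * alt_trprod m W1 (fun i => x (permnat t i)) *
    alt_trprod n W2 (fun i => x (permnat t (m + i))) =
    \sum_(a : 'S_m) \sum_(b : 'S_n) Phi (dsum_perm a b * t)%g.
  rewrite /alt_trprod -mulrA mulr_suml mulr_sumr; apply: eq_bigr => a _.
  rewrite mulr_sumr mulr_sumr; apply: eq_bigr => b _.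
  rewrite /Phi odd_permM odd_dsum_perm (signr_addb _ (odd_perm a (+) odd_perm b)).
  rewrite (signr_addb _ (odd_perm a)) big_cat big_map /=.
  have e1 : \prod_(u <- W1) \tr (wordmx (fun p => x (permnat t (permnat a p))) u) =
            \prod_(u <- W1) \tr (wordmx (fun p => x (permnat (dsum_perm a b * t) p)) u).
    rewrite !big_seq; apply: eq_bigr => u uW1; congr (\tr _); rewrite /wordmx !big_seq.
    apply: eq_bigr => p pu; rewrite permnatM permnat_dsum_perm.
    suff -> : (p < m)%N by [].
    by move/allP: W1m; apply; apply/flattenP; exists u.
  have e2 : \prod_(u <- W2) \tr (wordmx (fun p => x (permnat t (m + permnat b p))) u) =
      \prod_(u <- W2) \tr (wordmx (fun p => x (permnat (dsum_perm a b * t) p)) (map (addn m) u)).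
    apply: eq_bigr => u _; congr (\tr _); rewrite /wordmx big_map; apply: eq_bigr => p _.
    by rewrite permnatM permnat_dsum_perm ltnNge leq_addr /= addKn.
  rewrite e1 e2.
  set A := \prod_(_ <- W1) _; set B := \prod_(_ <- W2) _.
  set sa := _ ^+ odd_perm a; set sb := _ ^+ odd_perm b; set st := _ ^+ odd_perm t.
  ring.
rewrite /wedge (eq_bigr _ (fun t _ => expand t)) exchange_big /=.
under eq_bigr => a _ do rewrite exchange_big /=.
have reindex c : \sum_(t : 'S_(m + n)) Phi (c * t)%g =
    alt_trprod (m + n) (W1 ++ map (map (addn m)) W2) x.
  by rewrite /alt_trprod [RHS](reindex_inj (mulgI c)).
under eq_bigr => a _ do under eq_bigr => b _ do rewrite reindex.
set P := alt_trprod _ _ x.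
rewrite !sumr_const !card_Sn -mulrnA mulnC -(mulr_natl P) natrM mulKf //.
by rewrite mulf_neq0 // ((pcharf0P F).1 F_char0) -lt0n fact_gt0.
Qed.

Lemma reshape_iota_cons m mu : reshape (m :: mu) (iota 0 (m + sumn mu)) =
  iota 0 m :: map (map (addn m)) (reshape mu (iota 0 (sumn mu))).
Proof.
rewrite /= iotaD take_size_cat ?size_iota // drop_size_cat ?size_iota // add0n.
by rewrite map_reshape -iotaDl addn0.
Qed.

Lemma wedgeT_alt_trprod mu (x : nat -> M) :
  wedgeT mu x = alt_trprod (sumn mu) (reshape mu (iota 0 (sumn mu))) x.
Proof.
elim: mu x => [|m mu IH] x.
  rewrite /alt_trprod (big_pred1 1%g) ?odd_perm1 ?big_nil ?mulr1 // => t.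
  by apply/esym/eqP/permS0.
rewrite -[sumn _]/(m + sumn mu) reshape_iota_cons [wedgeT _ _]/=.
rewrite (eq_wedge _ _ _ (Tj_alt_trprod m) IH) wedge_alt_trprod //.
by rewrite /= cats0; apply/allP => p; rewrite mem_iota.
Qed.

Lemma perm_iota_reshape k (W : seq (seq nat)) : perm_eq (flatten W) (iota 0 k) ->
  exists rho : 'S_k, W = map (map (permnat rho)) (reshape (map size W) (iota 0 k)).
Proof.
move=> pW; set L := flatten W.
have /andP[uL Lk] := uniq_bounded_perm_iota pW.
have sL : size L = k by rewrite (perm_size pW) size_iota.
pose f (o : 'I_k) : 'I_k := insubd o (nth 0%N L o).
have fE o : val (f o) = nth 0%N L o.
  by rewrite insubdK //; apply: (allP Lk); rewrite mem_nth // sL.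
have f_inj : injective f.
  by move=> o1 o2 /(congr1 val); rewrite !fE => /eqP; rewrite nth_uniq ?sL // => /eqP /val_inj.
exists (perm f_inj); rewrite map_reshape.
suff -> : map (permnat (perm f_inj)) (iota 0 k) = L by rewrite /L -/(shape W) flattenK.
apply: (@eq_from_nth _ 0%N); first by rewrite size_map size_iota sL.
move=> i; rewrite size_map size_iota => ik.
rewrite (nth_map 0%N) ?size_iota // nth_iota // add0n.
by rewrite -[i]/(val (Ordinal ik)) permnat_ord permE fE.
Qed.

Lemma alt_trprod_wedgeT k W : perm_eq (flatten W) (iota 0 k) ->
  exists2 c : F, c = 1 \/ c = -1 &
    forall x : nat -> M, alt_trprod k W x = c * wedgeT (sort geq (map size W)) x.
Proof.
move=> pW; set W' := sort (relpre size geq) W.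
have pW' : perm_eq W W' by rewrite perm_sym perm_sort.
have sizeW' : map size W' = sort geq (map size W) by rewrite sort_map.
have pW'k : perm_eq (flatten W') (iota 0 k) by rewrite -(permPl (perm_flatten pW')).
have [rho eW'] := perm_iota_reshape pW'k.
have k_sum : k = sumn (map size W') by rewrite -size_flatten (perm_size pW'k) size_iota.
exists ((-1) ^+ odd_perm rho); first by case: odd_perm; [right | left].
move=> x; rewrite (alt_trprod_perm_eq _ _ pW') eW' alt_trprod_relabel -sizeW'.
by rewrite wedgeT_alt_trprod -k_sum.
Qed.

End Wedge.

Lemma card_set_count (T : finType) (A : {pred T}) (P : pred T) :
  #|[set x in A | P x]| = count P (enum A).
Proof.
rewrite -sum1_count big_enum_cond -sum1_card; apply: eq_bigl => x.
by rewrite inE.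
Qed.

Lemma perm_eq_orbit_weights (T I : finType) (s : {perm T}) (f : T -> nat) (g : I -> nat) :
  (forall t, 0 < f t)%N ->
  (forall m, 0 < m ->
     #|[set i | g i == m]| = #|[set C in porbits s | orbit_weight f C == m]|)%N ->
  perm_eq [seq g i | i <- enum I & g i != 0%N] [seq orbit_weight f C | C <- enum (porbits s)].
Proof.
move=> f_gt0 card_g; apply/allP => m _; apply/eqP.
have [->|m_gt0] := posnP m.
  have zero_g : 0%N \notin [seq g i | i <- enum I & g i != 0%N].
    by apply/mapP => -[i]; rewrite mem_filter => /andP[/negP gi0 _] e; apply: gi0; rewrite -e.
  have zero_f : 0%N \notin [seq orbit_weight f C | C <- enum (porbits s)].
    apply/mapP => -[C]; rewrite mem_enum => /imsetP[z _ ->] /esym/eqP.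
    rewrite sum_nat_eq0 => /forall_inP/(_ z (porbit_id s z))/eqP fz.
    by have := f_gt0 z; rewrite fz.
  by rewrite (count_memPn zero_g) (count_memPn zero_f).
rewrite !count_map -card_set_count -card_g // count_filter.
rewrite -(eq_card (A := [set i in I | g i == m])) ?card_set_count => [|i]; last first.
  by rewrite !inE.
by apply: eq_count => i /=; case: eqP => [->|]; rewrite ?andbT // -lt0n m_gt0.
Qed.

Section Blocks.
Variables (n : nat) (h : 'I_n -> nat).

(* [h] extended by [0] to [nat], so that offsets can be computed by induction *)
Definition hnat (i : nat) : nat := oapp h 0%N (insub i).
Definition offset (j : nat) : nat := (\sum_(i < j) hnat i)%N.
Definition block (t : 'I_n) : seq nat := iota (offset t) (h t).

Lemma hnat_ord (t : 'I_n) : hnat t = h t.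
Proof. by rewrite /hnat valK. Qed.

Lemma offsetS j : offset j.+1 = (offset j + hnat j)%N.
Proof. by rewrite /offset big_ord_recr. Qed.

Lemma offset_ord (t : 'I_n) : (\sum_(i < n | (i < t)%N) h i)%N = offset t.
Proof.
rewrite (eq_bigr (fun i : 'I_n => hnat i)) => [|i _]; last by rewrite hnat_ord.
rewrite -(big_mkord (fun i => i < t)%N) /offset -(big_mkord xpredT).
by rewrite (big_nat_widen 0 t n) // ltnW.
Qed.

Lemma leq_offset j j' : (j <= j')%N -> (offset j <= offset j')%N.
Proof.
move=> /subnKC <-; elim: (j' - j)%N => [|l IH]; first by rewrite addn0.
by rewrite addnS offsetS (leq_trans IH) ?leq_addr.
Qed.

Lemma offset_n : offset n = (\sum_(i < n) h i)%N.
Proof. by apply: eq_bigr => i _; rewrite hnat_ord. Qed.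

Lemma offset_block (t : 'I_n) : (offset t + h t <= offset n)%N.
Proof. by rewrite -hnat_ord -offsetS leq_offset. Qed.

Lemma count_blocks (P : pred nat) :
  (\sum_t count P (block t) = count P (iota 0 (offset n)))%N.
Proof.
rewrite (eq_bigr (fun t : 'I_n => count P (iota (offset t) (hnat t)))) => [|t _]; last first.
  by rewrite hnat_ord.
rewrite -(big_mkord xpredT (fun t => count P (iota (offset t) (hnat t)))).
suff gen N : (\sum_(0 <= t < N) count P (iota (offset t) (hnat t)) =
    count P (iota 0 (offset N)))%N by apply: gen.
elim: N => [|N IH]; first by rewrite big_geq // /offset big_ord0.
by rewrite big_nat_recr //= IH offsetS iotaD count_cat.
Qed.
End Blocks.

Lemma mxtrace_delta (R : pzSemiRingType) n (i : 'I_n) : \tr (delta_mx i i : 'M[R]_n) = 1.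
Proof.
rewrite /mxtrace (bigD1 i) //= mxE !eqxx big1 ?addr0 // => j.
by rewrite mxE => /negPf ->.
Qed.

Section TrSG.
Variables (F : fieldType) (d : nat).
Local Notation M := 'M[F]_d.

Lemma endo_tr_permop n (s : 'S_n) (A : endo F d n) :
  endo_tr (endo_comp (permop F s) A) = \sum_(i : tidx d n) A [ffun t => i (s t)] i.
Proof.
rewrite /endo_tr /endo_comp; apply: eq_bigr => i _.
rewrite (bigD1 [ffun t => i (s t)]) //= big1 ?addr0.
  by rewrite /permop (introT forallP) ?mul1r // => t; rewrite ffunE.
move=> l l_neq; rewrite /permop (introF forallP) ?mul0r //.
by move=> il; apply: (negP l_neq); apply/eqP/ffunP => t; rewrite ffunE (eqP (il t)).
Qed.

Lemma trSG_tr_perm_tensor n k h (s : 'S_n) (x : nat -> M) :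
  trSG k h s x = \sum_(t : 'S_k) (-1) ^+ odd_perm t * tr_perm_tensor s (Xblock h x t).
Proof.
rewrite /trSG endo_tr_permop exchange_big; apply: eq_bigr => tau _.
rewrite mulr_sumr; apply: eq_bigr => i _; congr (_ * _).
by apply: eq_bigr => t _; rewrite ffunE.
Qed.

Lemma Xblock_wordmx n k h (x : nat -> M) (tau : 'S_k) (t : 'I_n) :
  (\sum_(i < n) h i)%N = k ->
  Xblock h x tau t = wordmx (fun p => x (permnat tau p)) (block h t).
Proof.
move=> hk; have tk : (offset h t + h t <= k)%N by rewrite -hk -offset_n offset_block.
rewrite /Xblock /wordmx offset_ord.
transitivity (\big[@mulmx F d d d/1%:M]_(0 <= p < k |
    ((offset h t <= p) && (p < offset h t + h t))%N) x (permnat tau p)).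
  by rewrite big_mkord; apply: eq_bigr => p _; rewrite permnat_ord.
have -> : block h t = index_iota (offset h t) (offset h t + h t) by rewrite /index_iota addKn.
rewrite [RHS](big_nat_widen _ _ k) // [RHS](big_nat_widenl _ 0) //.
by apply: eq_bigl => p; rewrite /= andbC.
Qed.

Lemma trSG_alt_trprod n k (h : 'I_n -> nat) (s : 'S_n) :
  (0 < d)%N -> (forall i, 0 < h i)%N -> (\sum_(i < n) h i)%N = k ->
  exists W : seq (seq nat),
    [/\ forall x : nat -> M, trSG k h s x = alt_trprod k W x,
        perm_eq (flatten W) (iota 0 k), all (fun u => u != [::]) W
      & perm_eq (map size W) [seq orbit_weight h C | C <- enum (porbits s)]].
Proof.
move=> d_gt0 h_gt0 hk; set E : M := delta_mx (Ordinal d_gt0) (Ordinal d_gt0).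
have trE : \tr E = 1 by apply: mxtrace_delta.
have block_nz t : block h t != [::] by rewrite -size_eq0 size_iota -lt0n.
have w_fix t : block h t = [::] -> s t = t by move/eqP; rewrite (negPf (block_nz t)).
have [w' [trw' countw' cardw']] := tr_perm_tensor_words trE w_fix.
exists [seq w' t | t <- enum 'I_n & w' t != [::]]; split.
- move=> x; rewrite trSG_tr_perm_tensor; apply: eq_bigr => tau _; congr (_ * _).
  set y := fun p => x (permnat tau p).
  rewrite (eq_tr_perm_tensor _ (Y2 := fun t => wordmx_or E y (block h t))) => [|t].
    rewrite trw' big_map big_filter big_enum_cond [RHS]big_mkcond /=.
    by apply: eq_bigr => t _; case: (w' t).
  by rewrite Xblock_wordmx //; case: (block h t) (block_nz t).
- apply/seq.permP => P; rewrite count_flatten sumnE !big_map big_filter big_enum_cond.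
  rewrite -hk -offset_n -count_blocks -countw' [RHS](bigID (fun t => w' t != [::])) /=.
  by rewrite [X in (_ + X)%N]big1 ?addn0 // => t /negbNE /eqP ->.
- by apply/allP => u /mapP[t]; rewrite mem_filter => /andP[u_nz _] ->.
have -> : map size [seq w' t | t <- enum 'I_n & w' t != [::]] =
          [seq size (w' t) | t <- enum 'I_n & size (w' t) != 0%N].
  by rewrite -map_comp; congr map; apply: eq_filter => t; rewrite size_eq0.
apply: perm_eq_orbit_weights => // m m_gt0; rewrite cardw' //.
by apply: eq_card => C; rewrite !inE /orbit_weight (eq_bigr _ (fun t _ => size_iota _ _)).
Qed.

End TrSG.

Lemma sort_geq_perm_eq (s1 s2 : seq nat) : perm_eq s1 s2 -> sort geq s1 = sort geq s2.
Proof.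
move/perm_sortP; apply.
- by move=> a b; apply: leq_total.
- by move=> b a c ab bc; apply: leq_trans bc ab.
- by move=> a b /andP[ba ab]; apply/anti_leq/andP.
Qed.

Theorem mainTheorem5 (F : fieldType) (d n k : nat) (h : 'I_n -> nat)
  (s : 'S_n) :
  [pchar F] =i pred0 -> (0 < d)%N ->
  (forall i, (0 < h i)%N) ->
  (forall i j : 'I_n, (i <= j)%N -> (h j <= h i)%N) ->
  (\sum_(i < n) h i)%N = k ->
  let mu := cyc_type h s in
  (~~ (all odd mu && uniq mu) ->
     forall x : nat -> 'M[F]_d, trSG k h s x = 0) /\
  (all odd mu && uniq mu ->
     exists2 c : F, c = 1 \/ c = -1 &
       forall x : nat -> 'M[F]_d, trSG k h s x = c * wedgeT mu x).
Proof.
move=> F_char0 d_gt0 h_gt0 _ hk mu.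
have [W [trW labW W_nz sizeW]] := trSG_alt_trprod F s d_gt0 h_gt0 hk.
have muE : mu = sort geq (map size W) by apply: sort_geq_perm_eq; rewrite perm_sym.
split => [not_odd_uniq x | odd_uniq].
  rewrite trW alt_trprod_eq0 // ?((pcharf0P F).1 F_char0) //.
  by move: not_odd_uniq; rewrite muE all_sort sort_uniq.
have [c c_sign trc] := alt_trprod_wedgeT d F_char0 labW.
by exists c => // x; rewrite trW trc muE.
Qed.
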